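(* Let $(Q,\circ)$ and $(Q,* )$ be quandles on the same set $Q$ such that $$(a\circ b)*c=(a*c)\circ(b*c)\quad\text{and}\quad (a*b)\circ c=(a\circ c)*(b\circ c)\qquad\text{for all }a,b,c\in Q.$$ Then every finite word $w=s_1s_2\cdots s_k$ in the alphabet $\{\circ,*,\bar\circ,\bar*\}$ defines a quandle operation $\star_w$ on $Q$, where $$a\star_w b=(\cdots((a\,s_1\,b)\,s_2\,b)\cdots)\,s_k\,b$$ (and the empty word gives $a\star_w b=a$).
   Context: A quandle operation on a set $Q$ is a binary operation $*$ with $x*x=x$, unique right division, and $(x*y)*z=(x*z)*(y*z)$. For a quandle operation $*$, $\bar*$ denotes its right inverse operation: $a=c*b\iff c=a\,\bar*\,b$; similarly $\bar\circ$ for $\circ$. *)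

From Stdlib Require Import List.
Import ListNotations.

Definition is_quandle {Q : Type} (op : Q -> Q -> Q) : Prop :=
  (forall x : Q, op x x = x) /\
  (forall a b : Q, exists! c : Q, op c b = a) /\
  (forall x y z : Q, op (op x y) z = op (op x z) (op y z)).

Definition is_right_inverse {Q : Type} (op opb : Q -> Q -> Q) : Prop :=
  forall a b c : Q, a = op c b <-> c = opb a b.

Inductive letter : Type := LCirc | LStar | LCircBar | LStarBar.

Definition letter_op {Q : Type} (circ star circb starb : Q -> Q -> Q)
  (l : letter) : Q -> Q -> Q :=
  match l with
  | LCirc => circ | LStar => star | LCircBar => circb | LStarBar => starb
  end.

Definition word_op {Q : Type} (circ star circb starb : Q -> Q -> Q)
  (w : list letter) (a b : Q) : Q :=
  fold_left (fun x l => letter_op circ star circb starb l x b) w a.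

(* Every right translation [x |-> x s z] by a letter s is an endomorphism of
   all four operations: for [o] and [*] this is self-distributivity together
   with the two mixed distributive laws, for the barred operations it follows
   by taking right inverses, both of the operation and of the translation.
   Right translations by a word are composites of these, hence endomorphisms of
   every word operation, which is right self-distributivity of [star_w].
   Idempotency and right division are inherited letter by letter, the right
   divisor being obtained by undoing the word with the opposite letters in
   reverse order. *)
From Stdlib Require Import List.

Definition preserves {Q : Type} (phi : Q -> Q) (op : Q -> Q -> Q) : Prop :=
  forall x y : Q, phi (op x y) = op (phi x) (phi y).

Section RightInverse.

Variables (Q : Type) (op opb : Q -> Q -> Q).
Hypothesis Hopb : is_right_inverse op opb.

Lemma right_inverseK (c b : Q) : opb (op c b) b = c.
Proof. symmetry; apply Hopb; reflexivity. Qed.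

Lemma right_inverseKV (a b : Q) : op (opb a b) b = a.
Proof. symmetry; apply Hopb; reflexivity. Qed.

Lemma right_inverse_idem : (forall x : Q, op x x = x) -> forall x : Q, opb x x = x.
Proof. intros Hidem x; symmetry; apply Hopb; symmetry; apply Hidem. Qed.

Lemma preserves_right_inverse (phi : Q -> Q) :
  preserves phi op -> preserves phi opb.
Proof.
  intros Hphi x y.
  rewrite <- (right_inverseKV x y) at 2.
  rewrite Hphi; symmetry; apply right_inverseK.
Qed.

End RightInverse.

Lemma preserves_cancel {Q : Type} (phi psi : Q -> Q) (op : Q -> Q -> Q) :
  (forall x, psi (phi x) = x) -> (forall x, phi (psi x) = x) ->
  preserves psi op -> preserves phi op.
Proof.
  intros psiK phiK Hpsi x y.
  rewrite <- (psiK x), <- (psiK y), <- Hpsi, !phiK; reflexivity.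
Qed.

Definition letter_opp (l : letter) : letter :=
  match l with
  | LCirc => LCircBar | LStar => LStarBar
  | LCircBar => LCirc | LStarBar => LStar
  end.

Lemma letter_oppK (l : letter) : letter_opp (letter_opp l) = l.
Proof. destruct l; reflexivity. Qed.

Section Words.

Variables (Q : Type) (circ star circb starb : Q -> Q -> Q).
Hypotheses (Hcircb : is_right_inverse circ circb)
           (Hstarb : is_right_inverse star starb).

Notation L := (letter_op circ star circb starb).
Notation W := (word_op circ star circb starb).

Lemma letter_opK (l : letter) (c b : Q) : L (letter_opp l) (L l c b) b = c.
Proof.
  destruct l; simpl;
    solve [ apply (right_inverseK _ _ _ Hcircb) | apply (right_inverseK _ _ _ Hstarb)
          | apply (right_inverseKV _ _ _ Hcircb) | apply (right_inverseKV _ _ _ Hstarb) ].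
Qed.

Lemma letter_opKV (l : letter) (a b : Q) : L l (L (letter_opp l) a b) b = a.
Proof. rewrite <- (letter_oppK l) at 1; apply letter_opK. Qed.

Lemma letter_op_idem :
  (forall x, circ x x = x) -> (forall x, star x x = x) ->
  forall (l : letter) (x : Q), L l x x = x.
Proof.
  intros Cidem Sidem [] x; simpl; auto.
  - exact (right_inverse_idem _ _ _ Hcircb Cidem x).
  - exact (right_inverse_idem _ _ _ Hstarb Sidem x).
Qed.

Lemma word_op_cons (l : letter) (w : list letter) (a b : Q) :
  W (l :: w) a b = W w (L l a b) b.
Proof. reflexivity. Qed.

Lemma word_op_idem :
  (forall x, circ x x = x) -> (forall x, star x x = x) ->
  forall (w : list letter) (x : Q), W w x x = x.
Proof.
  intros Cidem Sidem w; induction w as [|l w IH]; intros x; [reflexivity|].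
  rewrite word_op_cons, letter_op_idem; auto.
Qed.

Definition word_div (w : list letter) (a b : Q) : Q :=
  fold_right (fun l x => L (letter_opp l) x b) a w.

Lemma word_div_cons (l : letter) (w : list letter) (a b : Q) :
  word_div (l :: w) a b = L (letter_opp l) (word_div w a b) b.
Proof. reflexivity. Qed.

Lemma word_divK (w : list letter) (c b : Q) : word_div w (W w c b) b = c.
Proof.
  revert c; induction w as [|l w IH]; intros c; [reflexivity|].
  rewrite word_op_cons, word_div_cons, IH; apply letter_opK.
Qed.

Lemma word_divKV (w : list letter) (a b : Q) : W w (word_div w a b) b = a.
Proof.
  induction w as [|l w IH]; [reflexivity|].
  rewrite word_div_cons, word_op_cons, letter_opKV; exact IH.
Qed.

Lemma word_op_right_division (w : list letter) (a b : Q) :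
  exists! c : Q, W w c b = a.
Proof.
  exists (word_div w a b); split; [apply word_divKV|].
  intros c Hc; rewrite <- Hc; apply word_divK.
Qed.

Definition preserves_letters (phi : Q -> Q) : Prop :=
  forall l : letter, preserves phi (L l).

Lemma preserves_letters_word_op (phi : Q -> Q) :
  preserves_letters phi -> forall w : list letter, preserves phi (W w).
Proof.
  intros Hphi w; induction w as [|l w IH]; intros x y; [reflexivity|].
  rewrite !word_op_cons, IH, Hphi; reflexivity.
Qed.

Lemma preserves_letters_basic (phi : Q -> Q) :
  preserves phi circ -> preserves phi star -> preserves_letters phi.
Proof.
  intros Hc Hs []; simpl; auto.
  - exact (preserves_right_inverse _ _ _ Hcircb _ Hc).
  - exact (preserves_right_inverse _ _ _ Hstarb _ Hs).
Qed.

Hypotheses (Cdist : forall x y z, circ (circ x y) z = circ (circ x z) (circ y z))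
           (Sdist : forall x y z, star (star x y) z = star (star x z) (star y z))
           (star_circ_dist : forall a b c, star (circ a b) c = circ (star a c) (star b c))
           (circ_star_dist : forall a b c, circ (star a b) c = star (circ a c) (circ b c)).

Lemma letter_translation_preserves_letters (l : letter) (z : Q) :
  preserves_letters (fun x => L l x z).
Proof.
  assert (Hcirc : preserves_letters (fun x => circ x z))
    by (apply preserves_letters_basic; intros x y; auto).
  assert (Hstar : preserves_letters (fun x => star x z))
    by (apply preserves_letters_basic; intros x y; auto).
  intros l'; destruct l.
  - exact (Hcirc l').
  - exact (Hstar l').
  - apply (preserves_cancel _ (fun x => circ x z));
      [intros x; exact (letter_opKV LCirc x z)
      | intros x; exact (letter_opK LCirc x z) | exact (Hcirc l')].
  - apply (preserves_cancel _ (fun x => star x z));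
      [intros x; exact (letter_opKV LStar x z)
      | intros x; exact (letter_opK LStar x z) | exact (Hstar l')].
Qed.

Lemma word_translation_preserves_letters (w : list letter) (z : Q) :
  preserves_letters (fun x => W w x z).
Proof.
  induction w as [|l w IH]; intros l' x y; [reflexivity|].
  rewrite !word_op_cons, (letter_translation_preserves_letters l z l').
  apply IH.
Qed.

Lemma word_op_self_distributive (w : list letter) (x y z : Q) :
  W w (W w x y) z = W w (W w x z) (W w y z).
Proof.
  exact (preserves_letters_word_op _ (word_translation_preserves_letters w z) w x y).
Qed.

End Words.

Theorem theorem4p11 (Q : Type) (circ star circb starb : Q -> Q -> Q)
  (Hcirc : is_quandle circ) (Hstar : is_quandle star)
  (Hcircb : is_right_inverse circ circb) (Hstarb : is_right_inverse star starb)
  (H1 : forall a b c : Q, star (circ a b) c = circ (star a c) (star b c))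
  (H2 : forall a b c : Q, circ (star a b) c = star (circ a c) (circ b c)) :
  forall w : list letter, is_quandle (word_op circ star circb starb w).
Proof.
  destruct Hcirc as [Cidem [_ Cdist]], Hstar as [Sidem [_ Sdist]].
  intros w; split; [|split].
  - exact (word_op_idem _ _ _ _ _ Hcircb Hstarb Cidem Sidem w).
  - exact (word_op_right_division _ _ _ _ _ Hcircb Hstarb w).
  - exact (word_op_self_distributive _ _ _ _ _ Hcircb Hstarb Cdist Sdist H1 H2 w).
Qed.
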